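(* Let $\mathcal{E}\subset\mathcal{P}_n$ be a maximal correctable error set containing the identity, and let $R=\{R_\chi\}_{\chi\in\hat G\setminus\{1\}}$ be a complete set of frame fields adapted to $\mathcal{E}$. Then there exist a Hilbert space $\mathcal{H}_{\rm gauge}$ and a (frame-dependent) tensor product $\otimes_R$, i.e. a bilinear map $\otimes_R:\mathcal{H}_{\rm pn}\times\mathcal{H}_{\rm gauge}\to\mathcal{H}_{\rm kin}$ whose linear extension to $\mathcal{H}_{\rm pn}\otimes\mathcal{H}_{\rm gauge}$ is a linear isomorphism onto $\mathcal{H}_{\rm kin}$ (written $\mathcal{H}_{\rm kin}=\mathcal{H}_{\rm pn}\otimes_R\mathcal{H}_{\rm gauge}$), such that: 1. $\dim\mathcal{H}_{\rm gauge}=2^{n-k}$ and $\mathcal{H}_{\rm gauge}$ carries a unitary representation $U_R$ of $G$ with $U^g(\ket{\psi}\otimes_R\ket{w})=\ket{\psi}\otimes_R U^g_R\ket{w}$ for all $g\in G$, $\ket\psi\in\mathcal{H}_{\rm pn}$, $\ket w\in\mathcal{H}_{\rm gauge}$ (i.e. $U^g=\mathrm{id}_{\mathcal{H}_{\rm pn}}\otimes_RU^g_R$); 2. $\mathcal{H}_{\rm gauge}$ has an orthonormal basis $\{\ket\chi\}_{\chi\in\hat G}$ with $\mathcal{H}_\chi=\mathcal{H}_{\rm pn}\otimes_R\ket\chi$ for all $\chi\in\hat G$; 3. for every $\ket\psi\in\mathcal{H}_{\rm pn}$ and $\chi\in\hat G$, $R_\chi(\ket\psi\otimes_R\ket1)=\ket\psi\otimes_R\ket\chi$;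 4. for every $\chi\in\hat G$ and every $E_\chi\in\mathcal{E}\cap C_\chi$ there is $\eta\in\mathbb{C}$, $|\eta|=1$, with $E_\chi(\ket\psi\otimes_R\ket1)=\eta\ket\psi\otimes_R\ket\chi$ for all $\ket\psi\in\mathcal{H}_{\rm pn}$; 5. $U_R$ is isomorphic to the regular representation of $G$.
   Context: Let $n\ge1$, $0\le k<n$, $\mathcal{H}_{\rm kin}=(\mathbb{C}^2)^{\otimes n}$, $\mathcal{P}_n$ the $n$-qubit Pauli group. Let $G=\mathbb{Z}_2^{\times(n-k)}$ and $U:G\to\mathcal{P}_n$, $g\mapsto U^g$, a faithful unitary representation with $-I\notin U(G)$. $\mathcal{H}_{\rm pn}=\{\psi:U^g\psi=\psi\ \forall g\}$, $\Pi_{\rm pn}=\frac1{|G|}\sum_gU^g$. $\hat G$ is the group of characters $\chi:G\to\{\pm1\}$, with trivial character $1$; $\mathcal{H}_\chi$ is the image of $P_\chi=\frac1{|G|}\sum_g\chi(g)U^g$ (so $\mathcal{H}_1=\mathcal{H}_{\rm pn}$), and $C_\chi=\{E\in\mathcal{P}_n:U^gE(U^g)^\dagger=\chi(g)E\ \forall g\}$. A set $\{E_i\}$ is correctable if $\Pi_{\rm pn}E_i^\dagger E_j\Pi_{\rm pn}=C_{ij}\Pi_{\rm pn}$ with $(C_{ij})$ Hermitian, and maximal if $\mathrm{rank}(C)=2^{n-k}$. A frame field of charge $\chi\in\hat G\setminus\{1\}$ is an isometry $R_\chi:\mathcal{H}_{\rm pn}\to\mathcal{H}_\chi$; a complete set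 of frame fields is a collection $R=\{R_\chi\}_{\chi\ne1}$, one for each nontrivial $\chi$; by convention $R_1:=\mathrm{id}_{\mathcal{H}_{\rm pn}}$. $R$ is adapted to $\mathcal{E}$ if for every $\chi\ne1$ there are $E_\chi\in\mathcal{E}\cap C_\chi$ and $\eta_\chi\in\mathbb{C}$, $|\eta_\chi|=1$, with $R_\chi=\eta_\chi E_\chi|_{\mathcal{H}_{\rm pn}}$ (equivalently, the recovery channel $\mathcal{O}_R(\rho)=\Pi_{\rm pn}\rho\Pi_{\rm pn}+\sum_{\chi\ne1}R_\chi^{-1}P_\chi\rho P_\chi R_\chi$ corrects $\mathcal{E}$). *)

From HB Require Import structures.
From mathcomp Require Import all_boot all_order all_algebra all_field.
Set Implicit Arguments. Unset Strict Implicit. Unset Printing Implicit Defensive.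
Import Order.TTheory GRing.Theory Num.Theory.
Local Open Scope ring_scope.

Definition adj {m p : nat} (A : 'M[algC]_(m, p)) : 'M[algC]_(p, m) :=
  (map_mx Num.conj A)^T.

Definition inner {m : nat} (u v : 'cV[algC]_m) : algC := (adj u *m v) 0 0.

(* j-th bit of the computational-basis index a of (C^2)^{\otimes n}. *)
Definition bit (j a : nat) : bool := odd (a %/ 2 ^ j).

(* Single-qubit Pauli matrices I, X, Y, Z (index 0,1,2,3), entry (r,s). *)
Definition sigma (p : 'I_4) (r s : bool) : algC :=
  match val p with
  | 0 => (r == s)%:R
  | 1 => (r != s)%:R
  | 2 => if r == s then 0 else if r then 'i else - 'i
  | _ => if r == s then (if r then -1 else 1) else 0
  end.

(* Pauli string sigma_{p_0} \otimes ... \otimes sigma_{p_{n-1}} on (C^2)^{\otimes n},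
   written entrywise via the Kronecker-product formula in the computational basis. *)
Definition pauli_string (n : nat) (p : n.-tuple 'I_4) : 'M[algC]_(2 ^ n) :=
  \matrix_(a, b) \prod_(j < n) sigma (tnth p j) (bit j a) (bit j b).

Definition pauli_group (n : nat) (P : 'M[algC]_(2 ^ n)) : Prop :=
  exists (c : 'I_4) (p : n.-tuple 'I_4), P = 'i ^+ c *: pauli_string p.

Notation grp m := 'rV['F_2]_m.

(* Characters chi : G -> {+1,-1}, encoded as boolean functions
   (true <-> value -1); the character property is multiplicativity. *)
Definition charT (m : nat) := {ffun grp m -> bool}.
Definition is_char (m : nat) (chi : charT m) : bool :=
  [forall g, forall h, chi (g + h) == chi g (+) chi h].
Definition chi_val (m : nat) (chi : charT m) (g : grp m) : algC :=
  (-1) ^+ chi g.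
Definition chi1 (m : nat) : charT m := [ffun _ => false].

Section Code.
Variables (n m : nat) (U : grp m -> 'M[algC]_(2 ^ n)).

Definition in_pn (psi : 'cV[algC]_(2 ^ n)) : Prop := forall g, U g *m psi = psi.

Definition Pi_pn : 'M[algC]_(2 ^ n) := #|grp m|%:R^-1 *: \sum_g U g.
Definition P_chi (chi : charT m) : 'M[algC]_(2 ^ n) :=
  #|grp m|%:R^-1 *: \sum_g (chi_val chi g *: U g).

Definition in_Hchi (chi : charT m) (v : 'cV[algC]_(2 ^ n)) : Prop :=
  exists u, v = P_chi chi *m u.

Definition in_Cchi (chi : charT m) (E : 'M[algC]_(2 ^ n)) : Prop :=
  pauli_group E /\ forall g, U g *m E *m adj (U g) = chi_val chi g *: E.

Definition correctable_with (N : nat) (E : 'I_N -> 'M[algC]_(2 ^ n))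
    (C : 'M[algC]_N) : Prop :=
  adj C = C /\
  forall i j, Pi_pn *m adj (E i) *m E j *m Pi_pn = C i j *: Pi_pn.

Definition maximal_correctable (N : nat) (E : 'I_N -> 'M[algC]_(2 ^ n)) : Prop :=
  exists C : 'M[algC]_N, correctable_with E C /\ \rank C = (2 ^ m)%N.

(* A frame field of charge chi: an isometry H_pn -> H_chi
   (represented by a matrix whose action off H_pn is irrelevant). *)
Definition frame_field (chi : charT m) (R : 'M[algC]_(2 ^ n)) : Prop :=
  (forall psi, in_pn psi -> in_Hchi chi (R *m psi)) /\
  (forall psi phi, in_pn psi -> in_pn phi ->
     inner (R *m psi) (R *m phi) = inner psi phi).

Definition complete_frame (R : charT m -> 'M[algC]_(2 ^ n)) : Prop :=
  forall chi, is_char chi -> chi != chi1 m -> frame_field chi (R chi).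

Definition Rext (R : charT m -> 'M[algC]_(2 ^ n)) (chi : charT m) : 'M[algC]_(2 ^ n) :=
  if chi == chi1 m then 1%:M else R chi.

Definition adapted (N : nat) (E : 'I_N -> 'M[algC]_(2 ^ n))
    (R : charT m -> 'M[algC]_(2 ^ n)) : Prop :=
  forall chi, is_char chi -> chi != chi1 m ->
    exists i : 'I_N, in_Cchi chi (E i) /\
      exists eta : algC, `|eta| = 1 /\
        forall psi, in_pn psi -> R chi *m psi = eta *: (E i *m psi).

End Code.

(* Regular representation of G on C^{|G|} (basis e_h, g . e_h = e_{g+h}). *)
Definition reg_repr (m : nat) (g : grp m) : 'M[algC]_(#|grp m|) :=
  \matrix_(a, b) (enum_val a == g + enum_val b)%:R.

(* Frame-dependent tensor product: H_pn \otimes H_gauge (H_gauge = C^d) is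
   modelled as the matrices M : 'M_(2^n, d) whose columns lie in H_pn, the
   elementary tensor psi \otimes w being psi *m w^T. *)
Definition tensR {N d : nat} (L : {linear 'M[algC]_(N, d) -> 'cV[algC]_N})
    (psi : 'cV[algC]_N) (w : 'cV[algC]_d) : 'cV[algC]_N :=
  L (psi *m w^T).

From HB Require Import structures.
From mathcomp Require Import all_boot all_order all_algebra all_field.
Import Order.TTheory GRing.Theory Num.Theory.
Local Open Scope ring_scope.

Set Implicit Arguments. Unset Strict Implicit. Unset Printing Implicit Defensive.

(* The projections P_chi split H_kin into the charge sectors H_chi, which are
   the joint eigenspaces of the U^g.  An adapted frame field R_chi is, on H_pn,
   a phase times a unitary Pauli error of charge chi, so it maps H_pn
   isometrically onto H_chi.  Hence, numbering the characters by the basis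
   vectors of C^(2^(n-k)), the map M |-> sum_chi R_chi (M e_chi) is an
   isomorphism H_pn (x) C^(2^(n-k)) -> H_kin, under which U^g becomes the
   diagonal matrix of the chi(g); the character table intertwines that diagonal
   representation with the regular one by character orthogonality.  Finally,
   two errors of the same charge agree on H_pn up to their correctability
   coefficient, which is a phase because both errors are unitary. *)

Definition unitary_mx N (A : 'M[algC]_N) : Prop := adj A *m A = 1%:M.

Lemma adj_mul m p q (A : 'M[algC]_(m, p)) (B : 'M[algC]_(p, q)) :
  adj (A *m B) = adj B *m adj A.
Proof. by rewrite /adj map_mxM trmx_mul. Qed.

Lemma adj_scale m p (c : algC) (A : 'M[algC]_(m, p)) : adj (c *: A) = c^* *: adj A.
Proof. by rewrite /adj map_mxZ linearZ. Qed.

Lemma adjK m p (A : 'M[algC]_(m, p)) : adj (adj A) = A.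
Proof. by apply/matrixP => i j; rewrite /adj !mxE conjCK. Qed.

Section UnitaryMatrices.
Variable N : nat.
Implicit Types (A : 'M[algC]_N) (u v : 'cV[algC]_N).

Lemma unitary_mx1 : unitary_mx (1%:M : 'M[algC]_N).
Proof. by rewrite /unitary_mx /adj map_mx1 trmx1 mulmx1. Qed.

Lemma unitary_mxC A : unitary_mx A -> A *m adj A = 1%:M.
Proof. exact: mulmx1C. Qed.

Lemma innerE u v : inner u v = \sum_i (u i 0)^* * v i 0.
Proof. by rewrite /inner /adj mxE; apply: eq_bigr => i _; rewrite !mxE. Qed.

Lemma inner_unitary A u v : unitary_mx A -> inner (A *m u) (A *m v) = inner u v.
Proof. by move=> AU; rewrite /inner adj_mul mulmxA -(mulmxA (adj u)) AU mulmx1. Qed.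

Lemma innerZZ (c : algC) u v : inner (c *: u) (c *: v) = `|c| ^+ 2 * inner u v.
Proof. by rewrite /inner adj_scale -scalemxAl -scalemxAr scalerA mxE mxE normCKC. Qed.

Lemma inner_self_eq0 u : (inner u u == 0) = (u == 0).
Proof.
apply/eqP/eqP => [|->]; last by rewrite /inner mulmx0 mxE.
rewrite innerE => /eqP; rewrite psumr_eq0 => [/allP u0|i _]; last first.
  by rewrite -normCKC exprn_ge0.
apply/matrixP => i j; rewrite ord1 mxE.
by have := u0 i (mem_index_enum _); rewrite -normCKC /= sqrf_eq0 normr_eq0 => /eqP.
Qed.

(* If two unitaries agree up to a scalar c on a set of vectors, then either
   |c| = 1 or that set is {0}. *)
Lemma unitary_agree_phase A B (c : algC) (S : 'cV[algC]_N -> Prop) :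
    unitary_mx A -> unitary_mx B ->
    (forall v, S v -> A *m v = c *: (B *m v)) ->
  exists eta : algC, `|eta| = 1 /\ forall v, S v -> A *m v = eta *: (B *m v).
Proof.
move=> AU BU AcB; have [c1|c_neq1] := eqVneq `|c| 1; first by exists c.
exists 1; split=> [|v Sv]; first exact: normr1.
suff ->: v = 0 by rewrite !mulmx0 scaler0.
apply/eqP; rewrite -inner_self_eq0.
have := inner_unitary v v AU; rewrite AcB // innerZZ inner_unitary // => /eqP.
rewrite -subr_eq0 -[X in _ - X]mul1r -mulrBl mulf_eq0 subr_eq0 sqrp_eq1 //.
by rewrite (negbTE c_neq1).
Qed.

End UnitaryMatrices.

Lemma bit0 a : bit 0 a = odd a.
Proof. by rewrite /bit expn0 divn1. Qed.

Lemma bitS j a : bit j.+1 a = bit j a./2.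
Proof. by rewrite /bit expnS divnMA divn2. Qed.

Lemma big_nat_double (R : nmodType) (F : nat -> R) k :
  \sum_(0 <= i < k.*2) F i = \sum_(0 <= i < k) (F i.*2 + F i.*2.+1).
Proof.
elim: k => [|k IH]; first by rewrite !big_geq.
by rewrite doubleS !big_nat_recr //= IH addrA.
Qed.

Lemma sum_prod_bits (R : comPzSemiRingType) n (f : 'I_n -> bool -> R) :
  \sum_(c < 2 ^ n) \prod_(j < n) f j (bit j c) = \prod_(j < n) (f j false + f j true).
Proof.
elim: n f => [|n IH] f; first by rewrite expn0 big_ord1 !big_ord0.
rewrite -(big_mkord xpredT (fun c => \prod_(j < n.+1) f j (bit j c))).
rewrite expnS mul2n big_nat_double big_ord_recl /=.
rewrite -(IH (fun j => f (lift ord0 j))).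
rewrite -(big_mkord xpredT (fun c => \prod_(j < n) f (lift ord0 j) (bit j c))) mulr_sumr.
apply: eq_bigr => i _; rewrite !big_ord_recl /= !bit0 odd_double /= mulrDl.
congr (_ * _ + _ * _); rewrite ?odd_double //; apply: eq_bigr => j _;
  by rewrite /bump /= add1n bitS /= ?doubleK ?uphalf_double.
Qed.

Lemma eq_bits n a b : (a < 2 ^ n)%N -> (b < 2 ^ n)%N ->
  (forall j, (j < n)%N -> bit j a = bit j b) -> a = b.
Proof.
elim: n a b => [|n IH] a b; first by rewrite expn0 !ltnS !leqn0 => /eqP-> /eqP->.
move=> a_lt b_lt eq_ab; rewrite -[a]odd_double_half -[b]odd_double_half.
have := eq_ab 0%N isT; rewrite !bit0 => ->.
congr (_ + _.*2)%N; apply: IH => [||j j_lt]; last by rewrite -!bitS eq_ab.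
  by rewrite ltn_half_double -mul2n -expnS.
by rewrite ltn_half_double -mul2n -expnS.
Qed.

Lemma sigma_unitary p r s :
  (sigma p false r)^* * sigma p false s + (sigma p true r)^* * sigma p true s =
  (r == s)%:R.
Proof.
case: p => -[|[|[|[|]]]] p_lt //; case: r; case: s;
  rewrite /sigma /= ?conjCi ?rmorph0 ?rmorph1 ?rmorphN ?conjCi ?mul0r ?mulr0 ?mul1r ?mulr1
          ?add0r ?addr0 ?mulNr ?mulrN ?opprK //.
all: try by rewrite -normCKC ?normCi ?normr1 expr1n.
all: by rewrite -expr2 sqrCi opprK.
Qed.

Lemma pauli_string_unitary n (p : n.-tuple 'I_4) : unitary_mx (pauli_string p).
Proof.
apply/matrixP => a b; rewrite !mxE.
under eq_bigr => c _ do rewrite /adj !mxE rmorph_prod -big_split /=.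
rewrite (sum_prod_bits
  (fun j x => (sigma (tnth p j) x (bit j a))^* * sigma (tnth p j) x (bit j b))).
under eq_bigr => j _ do rewrite sigma_unitary.
have [<-|neq_ab] := eqVneq a b; first by rewrite big1 // => j _; rewrite eqxx.
have [j neq_j] : exists j : 'I_n, bit j a != bit j b.
  apply/existsP; apply: contraT; rewrite negb_exists => /forallP eq_ab.
  case/eqP: neq_ab; apply/val_inj/(@eq_bits n); rewrite ?ltn_ord // => j j_lt.
  by have /negPn/eqP := eq_ab (Ordinal j_lt).
by rewrite (bigD1 j) //= (negbTE neq_j) mul0r.
Qed.

Lemma pauli_unitary n (P : 'M[algC]_(2 ^ n)) : pauli_group P -> unitary_mx P.
Proof.
case=> c [p ->]; rewrite /unitary_mx adj_scale -scalemxAl -scalemxAr scalerA.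
by rewrite pauli_string_unitary -normCKC normrX normCi !expr1n scale1r.
Qed.

Lemma F2_cases (x : 'F_2) : x = 0 \/ x = 1.
Proof. by case: x => -[|[|]] //= x_lt; [left|right]; apply: val_inj. Qed.

Lemma F2_addr_eq1 (x y : 'F_2) : (x + y == 1) = (x == 1) (+) (y == 1).
Proof. by case: (F2_cases x) => ->; case: (F2_cases y) => ->. Qed.

Lemma F2_nat_eq1 (b : bool) : ((b%:R : 'F_2) == 1) = b.
Proof. by case: b. Qed.

Lemma F2_eq1K (x : 'F_2) : ((x == 1)%:R : 'F_2) = x.
Proof. by case: (F2_cases x) => ->. Qed.

Lemma sum_sign_flip_eq0 (T : finType) (f : T -> bool) (h : T -> T) :
  injective h -> (forall x, f (h x) = ~~ f x) -> \sum_x ((-1) ^+ f x : algC) = 0.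
Proof.
move=> h_inj fh; set S := \sum_x _; have: S = - S.
  rewrite {1}/S (reindex_inj h_inj) /S -sumrN.
  by apply: eq_bigr => x _; rewrite fh signrN.
by move/eqP; rewrite -addr_eq0 -mulr2n mulrn_eq0 => /eqP.
Qed.

Section Characters.
Variable m : nat.
Implicit Types (chi : charT m) (g h a : grp m).

Lemma card_grp : #|grp m| = (2 ^ m)%N.
Proof. by rewrite card_mx card_Fp // mul1n. Qed.

Lemma card_grp_neq0 : (#|grp m|%:R : algC) != 0.
Proof. by rewrite pnatr_eq0 card_grp expn_eq0. Qed.

Lemma charD chi g h : is_char chi -> chi (g + h) = chi g (+) chi h.
Proof. by move/forallP => /(_ g) /forallP /(_ h) /eqP. Qed.

Lemma char0 chi : is_char chi -> chi 0 = false.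
Proof. by move=> chi_char; have := charD 0 0 chi_char; rewrite addr0; case: (chi 0). Qed.

Lemma chi_valD chi g h : is_char chi ->
  chi_val chi (g + h) = chi_val chi g * chi_val chi h.
Proof. by move=> chi_char; rewrite /chi_val charD // signr_addb. Qed.

Lemma chi_val0 chi : is_char chi -> chi_val chi 0 = 1.
Proof. by move=> chi_char; rewrite /chi_val char0. Qed.

Lemma chi_val_mulss chi g : chi_val chi g * chi_val chi g = 1.
Proof. by rewrite /chi_val -signr_addb addbb. Qed.

Lemma chi_valN chi g : is_char chi -> chi_val chi (- g) = chi_val chi g.
Proof.
move=> chi_char; have := chi_valD (- g) g chi_char; rewrite addNr chi_val0 // => gNg.
by rewrite -[LHS]mulr1 -(chi_val_mulss chi g) mulrA -gNg mul1r.
Qed.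

Lemma chi_val_conj chi g : (chi_val chi g)^* = chi_val chi g.
Proof. by rewrite /chi_val rmorph_sign. Qed.

Lemma chi1_char : is_char (chi1 m).
Proof. by apply/forallP => g; apply/forallP => h; rewrite !ffunE. Qed.

Lemma chi1_val g : chi_val (chi1 m) g = 1.
Proof. by rewrite /chi_val ffunE. Qed.

Lemma char_orthogonality chi chi' : is_char chi -> is_char chi' ->
  \sum_g chi_val chi g * chi_val chi' g = if chi == chi' then #|grp m|%:R else 0.
Proof.
move=> chi_char chi'_char; have [<-|neq] := eqVneq chi chi'.
  by under eq_bigr => g _ do rewrite chi_val_mulss; rewrite sumr_const.
have [g0 neq_g0] : exists g0, chi g0 != chi' g0.
  apply/existsP; apply: contraT; rewrite negb_exists => /forallP eq_chi.
  by case/eqP: neq; apply/ffunP => g; apply/eqP/negPn/eq_chi.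
under eq_bigr => g _ do rewrite /chi_val -signr_addb.
apply: (@sum_sign_flip_eq0 _ _ (+%R^~ g0)); first exact: addIr.
move=> g; rewrite !charD //; move: neq_g0.
by case: (chi g0); case: (chi' g0); case: (chi g); case: (chi' g).
Qed.

(* Pontryagin duality: a row a of F_2^m defines the character g |-> (-1)^(g . a),
   and every character arises this way from a unique a. *)
Definition dual_char a : charT m := [ffun g => (g *m a^T) 0 0 == 1].
Definition char_row chi : grp m := \row_j (chi (delta_mx 0 j))%:R.

Lemma dual_char_char a : is_char (dual_char a).
Proof.
apply/forallP => g; apply/forallP => h.
by rewrite !ffunE mulmxDl mxE F2_addr_eq1.
Qed.

Lemma dual_char_delta a j : dual_char a (delta_mx 0 j) = (a 0 j == 1).
Proof. by rewrite ffunE -(rowE j a^T) !mxE. Qed.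

Lemma eq_char chi chi' : is_char chi -> is_char chi' ->
  (forall j, chi (delta_mx 0 j) = chi' (delta_mx 0 j)) -> chi = chi'.
Proof.
move=> chi_char chi'_char eq_delta; apply/ffunP => g; rewrite [g]row_sum_delta.
apply: (big_ind (fun x => chi x = chi' x)) => [|x y eq_x eq_y|j _].
- by rewrite !char0.
- by rewrite !charD // eq_x eq_y.
by case: (F2_cases (g 0 j)) => ->; rewrite ?scale0r ?char0 // scale1r eq_delta.
Qed.

Lemma char_rowK chi : is_char chi -> dual_char (char_row chi) = chi.
Proof.
move=> chi_char; apply: eq_char => // [|j]; first exact: dual_char_char.
by rewrite dual_char_delta mxE F2_nat_eq1.
Qed.

Lemma dual_charK : cancel dual_char char_row.
Proof. by move=> a; apply/matrixP => i j; rewrite !mxE ord1 dual_char_delta F2_eq1K. Qed.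

Lemma sum_dual_char g :
  \sum_a chi_val (dual_char a) g = if g == 0 then #|grp m|%:R else 0.
Proof.
have [->|/eqP g_neq0] := eqVneq g 0.
  under eq_bigr => a _ do rewrite /chi_val ffunE mul0mx mxE eq_sym oner_eq0.
  by rewrite sumr_const.
have [j g_j] : exists j, g 0 j != 0.
  apply/existsP; apply: contraT; rewrite negb_exists => /forallP g0.
  by case: g_neq0; apply/matrixP => i j; rewrite ord1 mxE; apply/eqP/negPn/g0.
apply: (@sum_sign_flip_eq0 _ (fun a => dual_char a g) (+%R^~ (delta_mx 0 j))).
  exact: addIr.
move=> a; rewrite !ffunE linearD /= mulmxDr mxE F2_addr_eq1 trmx_delta -(colE j g) !mxE.
by case: (F2_cases (g 0 j)) g_j => -> //= _; rewrite addbT.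
Qed.

Definition char_of_index (j : 'I_(2 ^ m)) : charT m :=
  dual_char (enum_val (cast_ord (esym card_grp) j)).
Definition index_of_char chi : 'I_(2 ^ m) :=
  cast_ord card_grp (enum_rank (char_row chi)).

Lemma char_of_index_char j : is_char (char_of_index j).
Proof. exact: dual_char_char. Qed.

Lemma char_of_indexK : cancel char_of_index index_of_char.
Proof. by move=> j; rewrite /index_of_char dual_charK enum_valK cast_ordKV. Qed.

Lemma index_of_charK chi : is_char chi -> char_of_index (index_of_char chi) = chi.
Proof. by move=> chi_char; rewrite /char_of_index cast_ordK enum_rankK char_rowK. Qed.

Lemma char_of_index_inj : injective char_of_index.
Proof. exact: can_inj char_of_indexK. Qed.

Lemma eq_index_of_char chi chi' : is_char chi -> is_char chi' ->
  (index_of_char chi == index_of_char chi') = (chi == chi').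
Proof.
move=> chi_char chi'_char; apply/eqP/eqP => [eq_idx|-> //].
by rewrite -(index_of_charK chi_char) eq_idx index_of_charK.
Qed.

Lemma sum_char_of_index g :
  \sum_j chi_val (char_of_index j) g = if g == 0 then #|grp m|%:R else 0.
Proof.
rewrite -sum_dual_char (reindex (fun a => cast_ord card_grp (enum_rank a))) /=.
  by apply: eq_bigr => a _; rewrite /char_of_index cast_ordK enum_rankK.
exists (fun j => enum_val (cast_ord (esym card_grp) j)) => [a _|j _].
  by rewrite cast_ordK enum_rankK.
by rewrite enum_valK cast_ordKV.
Qed.

End Characters.

Section ChargeSectors.
Variables (n m : nat) (U : grp m -> 'M[algC]_(2 ^ n)).
Hypothesis U_pauli : forall g, pauli_group (U g).
Hypothesis U_hom : forall g h, U (g + h) = U g *m U h.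
Hypothesis U_one : U 0 = 1%:M.
Implicit Types (chi : charT m) (g : grp m) (v psi : 'cV[algC]_(2 ^ n)).

Lemma U_unitary g : unitary_mx (U g).
Proof. exact: pauli_unitary. Qed.

Lemma mulU_P_chi chi g : is_char chi ->
  U g *m P_chi U chi = chi_val chi g *: P_chi U chi.
Proof.
move=> chi_char; rewrite /P_chi -scalemxAr scalerA mulrC -scalerA; congr (_ *: _).
rewrite mulmx_sumr [in RHS](reindex_inj (addrI g)) scaler_sumr.
apply: eq_bigr => h _.
by rewrite -scalemxAr -U_hom chi_valD // !scalerA mulrA chi_val_mulss mul1r.
Qed.

Lemma in_HchiP chi v : is_char chi ->
  in_Hchi U chi v <-> forall g, U g *m v = chi_val chi g *: v.
Proof.
move=> chi_char; split=> [[u ->] g|Uv]; first by rewrite mulmxA mulU_P_chi // scalemxAl.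
exists v; rewrite /P_chi -scalemxAl mulmx_suml.
under eq_bigr => g _ do rewrite -scalemxAl Uv scalerA chi_val_mulss scale1r.
by rewrite sumr_const -scaler_nat scalerA mulVf ?card_grp_neq0 // scale1r.
Qed.

Lemma in_pn_Hchi1 psi : in_pn U psi <-> in_Hchi U (chi1 m) psi.
Proof.
split=> [Upsi|/in_HchiP Upsi g]; last by rewrite Upsi ?chi1_char // chi1_val scale1r.
by apply/in_HchiP=> [|g]; rewrite ?chi1_char // Upsi chi1_val scale1r.
Qed.

Lemma P_chi_Hchi chi chi' v : is_char chi -> is_char chi' -> in_Hchi U chi' v ->
  P_chi U chi *m v = (chi == chi')%:R *: v.
Proof.
move=> chi_char chi'_char /(in_HchiP _ chi'_char) Uv.
rewrite /P_chi -scalemxAl mulmx_suml.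
under eq_bigr => g _ do rewrite -scalemxAl Uv scalerA.
rewrite -scaler_suml char_orthogonality // scalerA.
by case: eqP => _; rewrite ?mulVf ?card_grp_neq0 ?mulr0.
Qed.

Lemma Pi_pn_pn psi : in_pn U psi -> Pi_pn U *m psi = psi.
Proof.
have ->: Pi_pn U = P_chi U (chi1 m).
  by congr (_ *: _); apply: eq_bigr => g _; rewrite chi1_val scale1r.
move=> /in_pn_Hchi1 psi1.
by rewrite (P_chi_Hchi (chi1_char m) (chi1_char m) psi1) eqxx scale1r.
Qed.

Lemma sum_P_chi : \sum_j P_chi U (char_of_index j) = 1%:M.
Proof.
rewrite /P_chi -scaler_sumr exchange_big /=.
under eq_bigr => g _ do rewrite -scaler_suml sum_char_of_index.
rewrite (bigD1 0) //= eqxx big1 ?addr0 => [|g /negbTE ->]; last by rewrite scale0r.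
by rewrite U_one scalerA mulVf ?card_grp_neq0 // scale1r.
Qed.

Section ChargedError.
Variables (chi : charT m) (E : 'M[algC]_(2 ^ n)).
Hypothesis chi_char : is_char chi.
Hypothesis E_charge : forall g, U g *m E *m adj (U g) = chi_val chi g *: E.

Lemma charged_error_Hchi psi : in_pn U psi -> in_Hchi U chi (E *m psi).
Proof.
move=> Upsi; apply/in_HchiP => // g.
rewrite mulmxA -[U g *m E]mulmx1 -(U_unitary g) mulmxA E_charge.
by rewrite -!scalemxAl -!mulmxA Upsi.
Qed.

Lemma adj_charged_error_pn v : in_Hchi U chi v -> in_pn U (adj E *m v).
Proof.
move=> /(in_HchiP _ chi_char) Uv g.
have Eadj_charge : U g *m adj E *m adj (U g) = chi_val chi g *: adj E.
  by have := congr1 adj (E_charge g); rewrite !adj_mul adjK adj_scale chi_val_conj mulmxA.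
rewrite mulmxA -[U g *m adj E]mulmx1 -(U_unitary g) mulmxA Eadj_charge.
by rewrite -!scalemxAl -mulmxA Uv -scalemxAr scalerA chi_val_mulss scale1r.
Qed.

End ChargedError.

Lemma correctable_same_charge (NE : nat) (E : 'I_NE -> 'M[algC]_(2 ^ n)) C chi i j :
    correctable_with U E C -> is_char chi -> unitary_mx (E j) ->
    (forall g, U g *m E i *m adj (U g) = chi_val chi g *: E i) ->
    (forall g, U g *m E j *m adj (U g) = chi_val chi g *: E j) ->
  forall psi, in_pn U psi -> E i *m psi = C j i *: (E j *m psi).
Proof.
move=> [_ EC] chi_char Ej_unit Ei_charge Ej_charge psi Upsi.
have Ei_psi := charged_error_Hchi chi_char Ei_charge Upsi.
have Ej_Ei_psi := adj_charged_error_pn chi_char Ej_charge Ei_psi.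
rewrite -[LHS]mul1mx -(unitary_mxC Ej_unit) -mulmxA.
rewrite -(Pi_pn_pn Ej_Ei_psi) -{1}(Pi_pn_pn Upsi) !mulmxA.
by rewrite -3!(mulmxA (E j)) EC -scalemxAr -scalemxAl -mulmxA Pi_pn_pn.
Qed.

End ChargeSectors.

Definition tens_map N d (F : 'I_d -> 'M[algC]_N) (M : 'M[algC]_(N, d)) : 'cV[algC]_N :=
  \sum_j F j *m col j M.

Lemma tens_map_is_linear N d (F : 'I_d -> 'M[algC]_N) : linear (tens_map F).
Proof.
move=> a M M'; rewrite /tens_map scaler_sumr -big_split; apply: eq_bigr => j _.
by rewrite linearP mulmxDr scalemxAr.
Qed.

HB.instance Definition _ N d F :=
  GRing.isLinear.Build algC _ _ _ (@tens_map N d F) (tens_map_is_linear F).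

Lemma tensR_tens_map N d (F : 'I_d -> 'M[algC]_N) psi w :
  tensR (tens_map F) psi w = \sum_j w j 0 *: (F j *m psi).
Proof.
rewrite /tensR /tens_map; apply: eq_bigr => j _.
have ->: col j (psi *m w^T) = w j 0 *: psi.
  by apply/matrixP => a b; rewrite !mxE big_ord1 !mxE mulrC (ord1 b).
by rewrite scalemxAr.
Qed.

Lemma tensR_delta N d (F : 'I_d -> 'M[algC]_N) psi j :
  tensR (tens_map F) psi (delta_mx j 0) = F j *m psi.
Proof.
rewrite tensR_tens_map (bigD1 j) //= big1 => [|i /negbTE neq_ij].
  by rewrite mxE !eqxx scale1r addr0.
by rewrite mxE neq_ij scale0r.
Qed.

Section FrameFields.
Variables (n m : nat) (U : grp m -> 'M[algC]_(2 ^ n)).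
Hypothesis U_pauli : forall g, pauli_group (U g).
Hypothesis U_hom : forall g h, U (g + h) = U g *m U h.
Hypothesis U_one : U 0 = 1%:M.
Variables (NE : nat) (E : 'I_NE -> 'M[algC]_(2 ^ n)).
Hypothesis E_id : exists i, E i = 1%:M.
Variable R : charT m -> 'M[algC]_(2 ^ n).
Hypothesis R_adapted : adapted U E R.
Implicit Types (chi : charT m) (v psi : 'cV[algC]_(2 ^ n)).

Lemma frame_field_error chi : is_char chi -> exists (j : 'I_NE) (eta : algC),
  [/\ `|eta| = 1, unitary_mx (E j),
      forall g, U g *m E j *m adj (U g) = chi_val chi g *: E j &
      forall psi, in_pn U psi -> Rext R chi *m psi = eta *: (E j *m psi)].
Proof.
move=> chi_char; have [->|chi_neq1] := eqVneq chi (chi1 m).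
  have [j Ej1] := E_id; exists j, 1; rewrite Ej1; split.
  - exact: normr1.
  - exact: unitary_mx1.
  - by move=> g; rewrite mulmx1 (unitary_mxC (U_unitary U_pauli g)) chi1_val scale1r.
  by move=> psi _; rewrite /Rext eqxx scale1r.
have [j [[Ej_pauli Ej_charge] [eta [eta1 R_Ej]]]] := R_adapted chi_char chi_neq1.
exists j, eta; split=> //; first exact: (pauli_unitary Ej_pauli).
by move=> psi Upsi; rewrite /Rext (negbTE chi_neq1) R_Ej.
Qed.

Lemma frame_field_Hchi chi psi : is_char chi -> in_pn U psi ->
  in_Hchi U chi (Rext R chi *m psi).
Proof.
move=> chi_char Upsi; have [j [eta [_ _ Ej_charge R_Ej]]] := frame_field_error chi_char.
rewrite R_Ej //.
have [u ->] := charged_error_Hchi U_pauli U_hom chi_char Ej_charge Upsi.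
by exists (eta *: u); rewrite scalemxAr.
Qed.

Lemma frame_field_eq0 chi psi : is_char chi -> in_pn U psi ->
  Rext R chi *m psi = 0 -> psi = 0.
Proof.
move=> chi_char Upsi; have [j [eta [eta1 Ej_unit _ R_Ej]]] := frame_field_error chi_char.
rewrite R_Ej //.
have eta_neq0 : eta != 0 by rewrite -normr_eq0 eta1 oner_eq0.
move/eqP; rewrite scaler_eq0 (negbTE eta_neq0) => /eqP Ej_psi.
by rewrite -[psi]mul1mx -Ej_unit -mulmxA Ej_psi mulmx0.
Qed.

Lemma frame_field_onto chi v : is_char chi -> in_Hchi U chi v ->
  exists psi, in_pn U psi /\ Rext R chi *m psi = v.
Proof.
move=> chi_char v_chi.
have [j [eta [eta1 Ej_unit Ej_charge R_Ej]]] := frame_field_error chi_char.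
have eta_neq0 : eta != 0 by rewrite -normr_eq0 eta1 oner_eq0.
have Upsi : in_pn U (eta^-1 *: (adj (E j) *m v)).
  move=> g; rewrite -scalemxAr.
  by rewrite (adj_charged_error_pn U_pauli U_hom chi_char Ej_charge v_chi).
exists (eta^-1 *: (adj (E j) *m v)); split=> //.
by rewrite R_Ej // -scalemxAr scalerA mulfV // scale1r mulmxA unitary_mxC // mul1mx.
Qed.

Definition frame_tens := tens_map (fun j : 'I_(2 ^ m) => Rext R (char_of_index j)).

Lemma P_chi_frame_tens (M : 'M[algC]_(2 ^ n, 2 ^ m)) i :
  (forall g, U g *m M = M) ->
  P_chi U (char_of_index i) *m frame_tens M = Rext R (char_of_index i) *m col i M.
Proof.
move=> UM; have col_pn j : in_pn U (col j M) by move=> g; rewrite colE mulmxA UM.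
rewrite mulmx_sumr (bigD1 i) //= big1 => [|j neq_ji].
  rewrite (P_chi_Hchi U_hom _ _ (frame_field_Hchi _ _)) ?char_of_index_char //.
  by rewrite eqxx scale1r addr0.
rewrite (P_chi_Hchi U_hom _ _ (frame_field_Hchi _ _)) ?char_of_index_char //.
by rewrite (inj_eq (@char_of_index_inj m)) eq_sym (negbTE neq_ji) scale0r.
Qed.

Lemma frame_tens_inj (M M' : 'M[algC]_(2 ^ n, 2 ^ m)) :
    (forall g, U g *m M = M) -> (forall g, U g *m M' = M') ->
  frame_tens M = frame_tens M' -> M = M'.
Proof.
move=> UM UM' eq_MM'; apply/eqP; rewrite -subr_eq0; apply/eqP/matrixP => a i.
have UD g : U g *m (M - M') = M - M' by rewrite mulmxBr UM UM'.
have /frame_field_eq0 : Rext R (char_of_index i) *m col i (M - M') = 0.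
  by rewrite -P_chi_frame_tens // /frame_tens linearB /= -/frame_tens eq_MM' subrr mulmx0.
move=> /(_ (char_of_index_char i)) col0.
have /matrixP/(_ a 0) : col i (M - M') = 0 by apply: col0 => g; rewrite colE mulmxA UD.
by rewrite !mxE.
Qed.

Lemma frame_tens_onto v : exists M, (forall g, U g *m M = M) /\ frame_tens M = v.
Proof.
have psi_ex j : exists psi, in_pn U psi /\
    Rext R (char_of_index j) *m psi = P_chi U (char_of_index j) *m v.
  by apply: frame_field_onto; [exact: char_of_index_char | exists v].
have [psi psiP] := fin_all_exists psi_ex.
exists (\matrix_(a, j) psi j a 0); split.
  move=> g; apply/matrixP => a j; rewrite !mxE.
  have /matrixP/(_ a 0) := (psiP j).1 g; rewrite mxE => <-.
  by apply: eq_bigr => b _; rewrite mxE.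
rewrite -[v]mul1mx -(sum_P_chi U_one) mulmx_suml; apply: eq_bigr => j _.
rewrite -(psiP j).2; congr (_ *m _).
by apply/matrixP => a b; rewrite !mxE (ord1 b).
Qed.

End FrameFields.

Section GaugeRepresentation.
Variable m : nat.
Implicit Types g h : grp m.

Definition gauge_rep g : 'M[algC]_(2 ^ m) := diag_mx (\row_j chi_val (char_of_index j) g).

Lemma gauge_repD g h : gauge_rep (g + h) = gauge_rep g *m gauge_rep h.
Proof.
rewrite /gauge_rep mulmx_diag; congr diag_mx; apply/matrixP => i j.
by rewrite !mxE chi_valD // char_of_index_char.
Qed.

Lemma gauge_rep0 : gauge_rep 0 = 1%:M.
Proof. by apply/matrixP => i j; rewrite !mxE chi_val0 ?char_of_index_char. Qed.

Lemma gauge_rep_unitary g : unitary_mx (gauge_rep g).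
Proof.
apply/matrixP => i j; rewrite /gauge_rep mul_mx_diag !mxE eq_sym.
by case: eqP => _; rewrite ?mulr1n ?chi_val_conj ?chi_val_mulss ?mulr0n ?rmorph0 ?mul0r.
Qed.

Definition char_table : 'M[algC]_(#|grp m|, 2 ^ m) :=
  \matrix_(a, j) chi_val (char_of_index j) (enum_val a).

Lemma char_table_intertwining g :
  char_table *m gauge_rep g = reg_repr g *m char_table.
Proof.
apply/matrixP => a j; rewrite mul_mx_diag !mxE.
under eq_bigr => b _ do rewrite !mxE.
rewrite -(big_enum_val (fun x => (enum_val a == g + x)%:R * chi_val (char_of_index j) x)).
rewrite (bigD1 (enum_val a - g)) //= big1 => [|x neq_x]; last first.
  case: eqP => [xa|_]; last by rewrite mul0r.
  by rewrite xa (addrC g) addrK eqxx in neq_x.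
rewrite (addrC g) subrK eqxx mul1r addr0.
by rewrite chi_valD ?chi_valN ?char_of_index_char.
Qed.

Lemma char_table_rank : \rank char_table = (2 ^ m)%N.
Proof.
have orth : char_table^T *m char_table = (#|grp m|%:R)%:M.
  apply/matrixP => i j; rewrite !mxE.
  under eq_bigr => a _ do rewrite !mxE.
  rewrite -(big_enum_val (fun x => chi_val (char_of_index i) x * chi_val (char_of_index j) x)).
  rewrite char_orthogonality ?char_of_index_char // (inj_eq (@char_of_index_inj m)).
  by case: eqP.
apply/eqP; rewrite eqn_leq rank_leq_col /=.
have := mxrankM_maxr char_table^T char_table.
by rewrite orth -scalemx1 mxrank_scale_nz ?card_grp_neq0 // mxrank1.
Qed.

End GaugeRepresentation.

Section CharacterBasis.
Variable m : nat.

Definition char_ket (chi : charT m) : 'cV[algC]_(2 ^ m) := delta_mx (index_of_char chi) 0.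

Lemma char_ket_orthonormal chi chi' : is_char chi -> is_char chi' ->
  inner (char_ket chi) (char_ket chi') = (chi == chi')%:R.
Proof.
move=> chi_char chi'_char; rewrite innerE (bigD1 (index_of_char chi)) //= big1.
  by rewrite !mxE !eqxx rmorph1 mul1r addr0 andbT eq_index_of_char.
by move=> i neq_i; rewrite !mxE (negbTE neq_i) rmorph0 mul0r.
Qed.

Lemma char_ket_span w : exists c : charT m -> algC,
  w = \sum_(chi | is_char chi) c chi *: char_ket chi.
Proof.
exists (fun chi => w (index_of_char chi) 0).
rewrite (reindex (@char_of_index m)) /=; last first.
  by exists (@index_of_char m) => [j _|chi]; [exact: char_of_indexK | exact: index_of_charK].
rewrite (eq_bigl xpredT) => [|j]; last by rewrite char_of_index_char.
apply/matrixP => a b; rewrite summxE (bigD1 a) //= big1 => [|j neq_j]; last first.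
  by rewrite !mxE char_of_indexK eq_sym (negbTE neq_j) mulr0.
by rewrite !mxE char_of_indexK !eqxx (ord1 b) mulr1 addr0.
Qed.

End CharacterBasis.

Section FrameTensorProduct.
Variables (n m : nat) (U : grp m -> 'M[algC]_(2 ^ n)).
Hypothesis U_pauli : forall g, pauli_group (U g).
Hypothesis U_hom : forall g h, U (g + h) = U g *m U h.
Variables (NE : nat) (E : 'I_NE -> 'M[algC]_(2 ^ n)).
Hypothesis E_max : maximal_correctable U E.
Hypothesis E_id : exists i, E i = 1%:M.
Variable R : charT m -> 'M[algC]_(2 ^ n).
Hypothesis R_adapted : adapted U E R.
Implicit Types (chi : charT m) (psi : 'cV[algC]_(2 ^ n)).

Local Notation L := (frame_tens R).

Lemma tensR_char_ket chi psi : is_char chi -> tensR L psi (char_ket chi) = Rext R chi *m psi.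
Proof. by move=> chi_char; rewrite tensR_delta index_of_charK. Qed.

Lemma tensR_gauge_rep g psi w : in_pn U psi ->
  U g *m tensR L psi w = tensR L psi (gauge_rep g *m w).
Proof.
move=> Upsi; rewrite !tensR_tens_map mulmx_sumr; apply: eq_bigr => j _.
have /in_HchiP chi_j :=
  frame_field_Hchi U_pauli U_hom E_id R_adapted (char_of_index_char j) Upsi.
rewrite -scalemxAr chi_j ?char_of_index_char // scalerA.
by rewrite mul_diag_mx !mxE mulrC.
Qed.

Lemma Hchi_tensR chi : is_char chi -> forall v,
  in_Hchi U chi v <-> exists psi, in_pn U psi /\ v = tensR L psi (char_ket chi).
Proof.
move=> chi_char v; split=> [v_chi|[psi [Upsi ->]]].
  have [psi [Upsi R_psi]] := frame_field_onto U_pauli U_hom E_id R_adapted chi_char v_chi.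
  by exists psi; rewrite tensR_char_ket // R_psi.
rewrite tensR_char_ket //.
exact: (frame_field_Hchi U_pauli U_hom E_id R_adapted chi_char Upsi).
Qed.

Lemma frame_field_tensR chi psi : is_char chi ->
  Rext R chi *m tensR L psi (char_ket (chi1 m)) = tensR L psi (char_ket chi).
Proof. by move=> chi_char; rewrite !tensR_char_ket ?chi1_char // /Rext eqxx mul1mx. Qed.

Lemma charged_error_tensR chi i : is_char chi -> in_Cchi U chi (E i) ->
  exists eta : algC, `|eta| = 1 /\ forall psi, in_pn U psi ->
    E i *m tensR L psi (char_ket (chi1 m)) = eta *: tensR L psi (char_ket chi).
Proof.
move=> chi_char [Ei_pauli Ei_charge].
have [j [etaj [etaj1 Ej_unit Ej_charge R_Ej]]] :=
  frame_field_error U_pauli E_id R_adapted chi_char.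
have [C [E_C _]] := E_max.
have [eta [eta1 Ei_Ej]] := unitary_agree_phase (pauli_unitary Ei_pauli) Ej_unit
  (correctable_same_charge U_pauli U_hom E_C chi_char Ej_unit Ei_charge Ej_charge).
have etaj_neq0 : etaj != 0 by rewrite -normr_eq0 etaj1 oner_eq0.
exists (eta / etaj); split=> [|psi Upsi].
  by rewrite normrM normrV ?unitfE // eta1 etaj1 invr1 mulr1.
rewrite !tensR_char_ket ?chi1_char // /Rext eqxx mul1mx Ei_Ej // R_Ej //.
by rewrite scalerA mulrVK ?unitfE.
Qed.

End FrameTensorProduct.

Unset Implicit Arguments. Set Strict Implicit.

Theorem mainTheorem4
  (n k : nat) (hk : (k < n)%N)
  (U : grp (n - k) -> 'M[algC]_(2 ^ n))
  (U_pauli : forall g, pauli_group (U g))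
  (U_hom : forall g h, U (g + h) = U g *m U h)
  (U_one : U 0 = 1%:M)
  (U_faithful : injective U)
  (U_noneg : forall g, U g != - 1%:M)
  (NE : nat) (E : 'I_NE -> 'M[algC]_(2 ^ n))
  (E_inj : injective E)
  (E_pauli : forall i, pauli_group (E i))
  (E_max : maximal_correctable U E)
  (E_id : exists i, E i = 1%:M)
  (R : charT (n - k) -> 'M[algC]_(2 ^ n))
  (R_complete : complete_frame U R)
  (R_adapted : adapted U E R) :
  exists (L : {linear 'M[algC]_(2 ^ n, 2 ^ (n - k)) -> 'cV[algC]_(2 ^ n)}),
    (* the linear extension of \otimes_R is an isomorphism onto H_kin *)
    ((forall M M' : 'M[algC]_(2 ^ n, 2 ^ (n - k)),
        (forall g, U g *m M = M) -> (forall g, U g *m M' = M') ->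
        L M = L M' -> M = M') /\
     (forall v : 'cV[algC]_(2 ^ n),
        exists M, (forall g, U g *m M = M) /\ L M = v)) /\
    (* 1. unitary representation U_R on H_gauge with U^g = id \otimes_R U_R^g *)
    (exists UR : grp (n - k) -> 'M[algC]_(2 ^ (n - k)),
      (forall g h, UR (g + h) = UR g *m UR h) /\ UR 0 = 1%:M /\
      (forall g, adj (UR g) *m UR g = 1%:M) /\
      (forall g psi w, in_pn U psi ->
          U g *m tensR L psi w = tensR L psi (UR g *m w)) /\
    (* 5. U_R is isomorphic to the regular representation of G *)
      (exists S : 'M[algC]_(#|grp (n - k)|, 2 ^ (n - k)),
          \rank S = (2 ^ (n - k))%N /\ \rank S = #|grp (n - k)| /\
          forall g, S *m UR g = reg_repr g *m S)) /\
    (* 2.-4. orthonormal basis {|chi>} of H_gauge indexed by characters *)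
    (exists ket : charT (n - k) -> 'cV[algC]_(2 ^ (n - k)),
      (forall chi chi', is_char chi -> is_char chi' ->
          inner (ket chi) (ket chi') = (chi == chi')%:R) /\
      (forall w, exists c : charT (n - k) -> algC,
          w = \sum_(chi | is_char chi) c chi *: ket chi) /\
      (* 2. H_chi = H_pn \otimes_R |chi> *)
      (forall chi, is_char chi -> forall v,
          in_Hchi U chi v <-> exists psi, in_pn U psi /\ v = tensR L psi (ket chi)) /\
      (* 3. R_chi (psi \otimes_R |1>) = psi \otimes_R |chi> *)
      (forall chi psi, is_char chi -> in_pn U psi ->
          Rext R chi *m tensR L psi (ket (chi1 (n - k))) = tensR L psi (ket chi)) /\
      (* 4. error operators act as frame fields up to a phase *)
      (forall chi i, is_char chi -> in_Cchi U chi (E i) ->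
          exists eta : algC, `|eta| = 1 /\
            forall psi, in_pn U psi ->
              E i *m tensR L psi (ket (chi1 (n - k))) = eta *: tensR L psi (ket chi))).
Proof.
exists (frame_tens R); split; [split|split].
- exact: (frame_tens_inj U_pauli U_hom E_id R_adapted).
- exact: (frame_tens_onto U_pauli U_hom U_one E_id R_adapted).
- exists (@gauge_rep (n - k)); split; [exact: gauge_repD|split; [exact: gauge_rep0|]].
  split; first exact: gauge_rep_unitary.
  split; first exact: (tensR_gauge_rep U_pauli U_hom E_id R_adapted).
  exists (@char_table (n - k)).
  rewrite char_table_rank; split=> //; split; last exact: char_table_intertwining.
  by rewrite card_grp.
exists (@char_ket (n - k)); split; first exact: char_ket_orthonormal.
split; first exact: char_ket_span.
split; first exact: (Hchi_tensR U_pauli U_hom E_id R_adapted).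
split; first by move=> chi psi chi_char _; apply: frame_field_tensR.
exact: (charged_error_tensR U_pauli U_hom E_max E_id R_adapted).
Qed.
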